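(* Let $n\ge 2$ be an integer. A relative equilibrium of the Newtonian planar $(1+2n)$-body problem whose configuration consists of a central mass at the origin surrounded by two homothetic regular $n$-gons, with vertices $\rho_1e^{2\pi i l/n}$ and $\rho_2e^{2\pi i l/n}$ ($l=0,\dots,n-1$, $0<\rho_1<\rho_2$), is never really perverse.
   Context: The Newtonian planar $N$-body problem (gravitational constant $1$): bodies with masses $\mu_i>0$ at positions $r_i\in\mathbb{C}$ satisfy $\mu_i\ddot r_i=\sum_{j\ne i}\mu_i\mu_j\,\frac{r_j-r_i}{|r_j-r_i|^3}$. A relative equilibrium (angular velocity $1$) is a motion $r_i(t)=r_ie^{it}$ that is a solution. A mass system for this configuration is a vector $(m_0,m_1,m_2)$ of positive numbers: mass $m_0$ at the center and mass $m_j$ at every vertex of the $j$-th polygon; total mass $m_0+n(m_1+m_2)$, center of mass at the origin. The relative equilibrium is really perverse if there exist two distinct mass systems with the same total mass and the same center of mass for each of which $r_i(t)=r_ie^{it}$ is a solution. *)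

From Stdlib Require Import Reals Lra Lia.
From Coquelicot Require Import Coquelicot.
Open Scope R_scope.

(* Planar (1+2n)-body configuration: bodies are indexed by k = 0 .. 2n.
   k = 0 : central body at the origin;
   k = 1 .. n : vertex rho1 * e^{2 pi i (k-1)/n} of the first n-gon;
   k = n+1 .. 2n : vertex rho2 * e^{2 pi i (k-n-1)/n} of the second n-gon.
   Points of C are represented by their (real, imaginary) parts. *)

Definition vertex (n : nat) (rho : R) (l : nat) : R * R :=
  (rho * cos (2 * PI * INR l / INR n), rho * sin (2 * PI * INR l / INR n)).

Definition pos (n : nat) (rho1 rho2 : R) (k : nat) : R * R :=
  if Nat.eqb k 0 then (0, 0)
  else if Nat.leb k n then vertex n rho1 (k - 1)
  else vertex n rho2 (k - n - 1).

Definition mass (n : nat) (m0 m1 m2 : R) (k : nat) : R :=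
  if Nat.eqb k 0 then m0 else if Nat.leb k n then m1 else m2.

(* the motion r_k(t) = r_k e^{it}, real and imaginary parts *)
Definition motx (n : nat) (rho1 rho2 : R) (k : nat) (t : R) : R :=
  fst (pos n rho1 rho2 k) * cos t - snd (pos n rho1 rho2 k) * sin t.
Definition moty (n : nat) (rho1 rho2 : R) (k : nat) (t : R) : R :=
  fst (pos n rho1 rho2 k) * sin t + snd (pos n rho1 rho2 k) * cos t.

Definition dist_at (n : nat) (rho1 rho2 : R) (k j : nat) (t : R) : R :=
  sqrt ((motx n rho1 rho2 j t - motx n rho1 rho2 k t) ^ 2
        + (moty n rho1 rho2 j t - moty n rho1 rho2 k t) ^ 2).

Definition force (n : nat) (rho1 rho2 m0 m1 m2 : R)
  (c : nat -> R -> R) (k : nat) (t : R) : R :=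
  sum_f_R0 (fun j =>
    if Nat.eqb j k then 0
    else mass n m0 m1 m2 k * mass n m0 m1 m2 j * (c j t - c k t)
           / (dist_at n rho1 rho2 k j t) ^ 3) (2 * n).

Definition is_solution (n : nat) (rho1 rho2 m0 m1 m2 : R) : Prop :=
  forall (k : nat) (t : R), (k <= 2 * n)%nat ->
    mass n m0 m1 m2 k * Derive_n (motx n rho1 rho2 k) 2 t
      = force n rho1 rho2 m0 m1 m2 (motx n rho1 rho2) k t /\
    mass n m0 m1 m2 k * Derive_n (moty n rho1 rho2 k) 2 t
      = force n rho1 rho2 m0 m1 m2 (moty n rho1 rho2) k t.

Definition total_mass (n : nat) (m0 m1 m2 : R) : R := m0 + INR n * (m1 + m2).

Definition com (n : nat) (rho1 rho2 m0 m1 m2 : R) : R * R :=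
  (sum_f_R0 (fun k => mass n m0 m1 m2 k * fst (pos n rho1 rho2 k)) (2 * n)
     / total_mass n m0 m1 m2,
   sum_f_R0 (fun k => mass n m0 m1 m2 k * snd (pos n rho1 rho2 k)) (2 * n)
     / total_mass n m0 m1 m2).

Definition mass_system (n : nat) (rho1 rho2 m0 m1 m2 : R) : Prop :=
  0 < m0 /\ 0 < m1 /\ 0 < m2 /\ com n rho1 rho2 m0 m1 m2 = (0, 0).

Definition really_perverse (n : nat) (rho1 rho2 : R) : Prop :=
  exists m0 m1 m2 m0' m1' m2' : R,
    mass_system n rho1 rho2 m0 m1 m2 /\ mass_system n rho1 rho2 m0' m1' m2' /\
    (m0, m1, m2) <> (m0', m1', m2') /\
    total_mass n m0 m1 m2 = total_mass n m0' m1' m2' /\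
    com n rho1 rho2 m0 m1 m2 = com n rho1 rho2 m0' m1' m2' /\
    is_solution n rho1 rho2 m0 m1 m2 /\ is_solution n rho1 rho2 m0' m1' m2'.

From Stdlib Require Import Reals Lra Lia.
From Coquelicot Require Import Coquelicot.
Open Scope R_scope.

(* Let x = rho1 / rho2.  At t = 0 the x-components of the equations of motion of
   the vertices rho1 and rho2 on the positive real axis, together with the equality
   of the total masses, are three linear equations for the difference of two mass
   systems.  They reduce to a homogeneous 2x2 system with determinant
   (n + S)^2 + (n + x^2 G(x)) (K(x) - n), where S is the self-interaction of a unit
   n-gon, G(x) the pull of the unit n-gon on the point x and K(x) the pull of the
   n-gon of radius x on the point 1.
   The potential H(x) = sum_l |e^(i th_l) - x|^(-1) of the unit n-gon expands as
   sum_m x^m sum_l P_m(cos th_l), and each coefficient is nonnegative: by Laplace's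
   formula P_m(cos th) = sum_k c_k c_(m-k) cos((2k - m) th) with c_k > 0, and
   sum_l cos(j th_l) is either n or 0.  Hence H increases, H(x) > n for x > 0,
   G = H' >= 0 and K = H + x G > n, so the determinant is positive and the two mass
   systems coincide. *)

Lemma sum_f_R0_mul_l (c : R) (u : nat -> R) N :
  sum_f_R0 (fun i => c * u i) N = c * sum_f_R0 u N.
Proof. rewrite scal_sum. apply sum_eq. intros; ring. Qed.

Lemma sum_f_R0_div_r (u : nat -> R) N r :
  sum_f_R0 u N / r = sum_f_R0 (fun i => u i / r) N.
Proof. unfold Rdiv. now rewrite Rmult_comm, scal_sum. Qed.

Lemma sum_f_R0_swap (f : nat -> nat -> R) N M :
  sum_f_R0 (fun l => sum_f_R0 (fun k => f l k) M) N =
  sum_f_R0 (fun k => sum_f_R0 (fun l => f l k) N) M.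
Proof.
  induction N as [|N IHN]; [reflexivity|].
  simpl. rewrite IHN, <- plus_sum. reflexivity.
Qed.

Lemma is_series_sum_f_R0 (u : nat -> nat -> R) (v : nat -> R) N :
  (forall l, (l <= N)%nat -> is_series (u l) (v l)) ->
  is_series (fun m => sum_f_R0 (fun l => u l m) N) (sum_f_R0 v N).
Proof.
  induction N as [|N IHN]; intros H; simpl; [apply H; lia|].
  apply (is_series_plus (fun m => sum_f_R0 (fun l => u l m) N) (u (S N))).
  - apply IHN. intros; apply H; lia.
  - apply H; lia.
Qed.

Lemma is_series_of_lim_sum (a : nat -> R) (l : R) :
  is_lim_seq (fun N => sum_f_R0 a N) l -> is_series a l.
Proof.
  intros H. apply (is_lim_seq_ext _ (sum_n a)) in H; [exact H|].
  intros N. now rewrite sum_n_Reals.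
Qed.

Lemma is_lim_seq_pow_mul_bounded (x : R) (u : nat -> R) :
  0 <= x < 1 -> (forall m, Rabs (u m) <= 1) -> is_lim_seq (fun m => x ^ m * u m) 0.
Proof.
  intros Hx Hu.
  assert (Hgeom : is_lim_seq (fun m => x ^ m) 0).
  { apply is_lim_seq_geom. rewrite Rabs_pos_eq; lra. }
  apply is_lim_seq_le_le with (u := fun m => - x ^ m) (w := fun m => x ^ m).
  - intros m. pose proof (pow_le x m ltac:(lra)).
    specialize (Hu m). apply Rabs_le_between in Hu. split; nra.
  - replace (Finite 0) with (Rbar_opp 0) by (simpl; f_equal; ring).
    now apply -> is_lim_seq_opp.
  - exact Hgeom.
Qed.

Lemma is_derive_sum_f_R0 (f : nat -> R -> R) (df : nat -> R) x N :
  (forall l, is_derive (f l) x (df l)) ->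
  is_derive (fun y => sum_f_R0 (fun l => f l y) N) x (sum_f_R0 df N).
Proof.
  intros Hf. induction N as [|N IHN]; simpl; [apply Hf|].
  apply (is_derive_plus (fun y => sum_f_R0 (fun l => f l y) N)); [exact IHN | apply Hf].
Qed.

Lemma is_derive_ge0_of_right_monotone (f : R -> R) x l d : 0 < d -> is_derive f x l ->
  (forall y, x < y < x + d -> f x <= f y) -> 0 <= l.
Proof.
  intros Hd Hder Hmono. apply is_derive_Reals in Hder.
  destruct (Rle_or_lt 0 l) as [|Hl]; [assumption|].
  destruct (Hder (- l) ltac:(lra)) as [del Hdel].
  pose proof (cond_pos del).
  set (h := Rmin (del / 2) (d / 2)).
  assert (0 < h) by (apply Rmin_glb_lt; lra).
  assert (h <= del / 2) by apply Rmin_l. assert (h <= d / 2) by apply Rmin_r.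
  specialize (Hdel h ltac:(lra) ltac:(rewrite Rabs_pos_eq; lra)).
  specialize (Hmono (x + h) ltac:(lra)).
  assert (0 <= (f (x + h) - f x) / h)
    by (apply Rmult_le_pos; [lra | left; apply Rinv_0_lt_compat; lra]).
  apply Rabs_lt_between in Hdel. lra.
Qed.

Lemma Rdiv_in_01 a b : 0 < a -> a < b -> 0 < a / b < 1.
Proof.
  intros Ha Hab. split; [apply Rdiv_lt_0_compat; lra|].
  apply Rmult_lt_reg_r with b; [lra|]. unfold Rdiv. rewrite Rmult_assoc, Rinv_l; lra.
Qed.

Lemma cos2_sin2 th : cos th ^ 2 + sin th ^ 2 = 1.
Proof. rewrite <- (sin2_cos2 th). unfold Rsqr. ring. Qed.

Lemma cos_double_of_sin_0 y : sin y = 0 -> cos (2 * y) = 1.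
Proof. intros H. rewrite cos_2a_sin, H. ring. Qed.

(** * Legendre expansion of the inverse distance *)

(* [invsqrt_coef k] = C(2k, k) / 4^k is the k-th Taylor coefficient of (1 - z)^(-1/2). *)
Fixpoint invsqrt_coef (k : nat) : R :=
  match k with
  | O => 1
  | S j => invsqrt_coef j * (2 * INR j + 1) / (2 * INR j + 2)
  end.

Lemma invsqrt_coef_pos k : 0 < invsqrt_coef k.
Proof.
  induction k as [|k IHk]; simpl invsqrt_coef; [lra|].
  pose proof (pos_INR k).
  apply Rmult_lt_0_compat; [nra | apply Rinv_0_lt_compat; lra].
Qed.

Lemma invsqrt_coef_le_1 k : invsqrt_coef k <= 1.
Proof.
  induction k as [|k IHk]; simpl invsqrt_coef; [lra|].
  pose proof (pos_INR k). pose proof (invsqrt_coef_pos k).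
  apply Rle_trans with (invsqrt_coef k); [|exact IHk].
  apply Rmult_le_reg_r with (2 * INR k + 2); [lra|].
  unfold Rdiv; rewrite Rmult_assoc, Rinv_l by lra. nra.
Qed.

Lemma INR_mul_invsqrt_coef_S k :
  INR (S k) * invsqrt_coef (S k) = invsqrt_coef k * (2 * INR k + 1) / 2.
Proof. simpl invsqrt_coef. rewrite S_INR. pose proof (pos_INR k). field. lra. Qed.

Definition invsqrt_conv (m : nat) : R :=
  sum_f_R0 (fun k => invsqrt_coef k * invsqrt_coef (m - k)) m.

Definition invsqrt_conv_weighted (m : nat) : R :=
  sum_f_R0 (fun k => INR k * invsqrt_coef k * invsqrt_coef (m - k)) m.

Lemma invsqrt_conv_weighted_sym m :
  2 * invsqrt_conv_weighted m = INR m * invsqrt_conv m.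
Proof.
  unfold invsqrt_conv_weighted, invsqrt_conv.
  set (w := fun k => INR k * invsqrt_coef k * invsqrt_coef (m - k)).
  assert (Hrev : sum_f_R0 w m =
    sum_f_R0 (fun k => INR (m - k) * invsqrt_coef (m - k) * invsqrt_coef k) m).
  { rewrite <- (sum_f_R0_skip w). apply sum_eq; intros i Hi. unfold w.
    replace (m - (m - i))%nat with i by lia. reflexivity. }
  replace (2 * sum_f_R0 w m) with (sum_f_R0 w m + sum_f_R0 w m) by ring.
  rewrite Hrev at 2. rewrite <- plus_sum, scal_sum.
  apply sum_eq; intros i Hi. unfold w. rewrite minus_INR by lia. ring.
Qed.

Lemma invsqrt_conv_weighted_S m :
  invsqrt_conv_weighted (S m) = invsqrt_conv_weighted m + invsqrt_conv m / 2.
Proof.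
  unfold invsqrt_conv_weighted, invsqrt_conv.
  rewrite decomp_sum by lia. simpl Init.Nat.pred.
  simpl INR at 1. rewrite !Rmult_0_l, Rplus_0_l.
  unfold Rdiv. rewrite (Rmult_comm _ (/ 2)), scal_sum, <- plus_sum.
  apply sum_eq; intros i Hi.
  replace (S m - S i)%nat with (m - i)%nat by lia.
  rewrite INR_mul_invsqrt_coef_S. field.
Qed.

(* The square of (1 - z)^(-1/2) is 1 / (1 - z): the weighted convolution computed in
   two ways gives (m + 1) conv(m + 1) = (m + 1) conv(m). *)
Lemma invsqrt_conv_1 m : invsqrt_conv m = 1.
Proof.
  induction m as [|m IHm]; [unfold invsqrt_conv; simpl; ring|].
  pose proof (invsqrt_conv_weighted_sym m) as Hm.
  pose proof (invsqrt_conv_weighted_sym (S m)) as HSm.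
  rewrite invsqrt_conv_weighted_S, S_INR, IHm in HSm. rewrite IHm in Hm.
  pose proof (pos_INR m).
  apply Rmult_eq_reg_l with (INR m + 1); lra.
Qed.

(* [dist2 x th] = |e^(i th) - x|^2. *)
Definition dist2 (x th : R) : R := 1 - 2 * x * cos th + x ^ 2.

Lemma dist2_pos x th : 0 <= x < 1 -> 0 < dist2 x th.
Proof.
  intros Hx. unfold dist2. pose proof (COS_bound th). nra.
Qed.

Section GeometricTrig.

Variables x th : R.
Hypothesis Hx : 0 <= x < 1.

Let c := cos th.
Let s := sin th.
Let geom_cos (m : nat) := x ^ m * cos (INR m * th).
Let geom_sin (m : nat) := x ^ m * sin (INR m * th).

(* The real and imaginary parts of (1 - x e^(i th)) * sum_(m <= N) (x e^(i th))^m
   = 1 - (x e^(i th))^(N + 1). *)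
Lemma geom_trig_partial_sums N :
  (1 - x * c) * sum_f_R0 geom_cos N + x * s * sum_f_R0 geom_sin N = 1 - geom_cos (S N) /\
  - (x * s) * sum_f_R0 geom_cos N + (1 - x * c) * sum_f_R0 geom_sin N = - geom_sin (S N).
Proof.
  assert (Hrec : forall m, geom_cos (S m) = x * (geom_cos m * c - geom_sin m * s) /\
                           geom_sin (S m) = x * (geom_sin m * c + geom_cos m * s)).
  { intros m. unfold geom_cos, geom_sin, c, s. rewrite S_INR.
    replace ((INR m + 1) * th) with (INR m * th + th) by ring.
    rewrite cos_plus, sin_plus. simpl pow. split; ring. }
  induction N as [|N [IH1 IH2]].
  - destruct (Hrec 0%nat) as [H1 H2]. simpl sum_f_R0. rewrite H1, H2.
    unfold geom_cos, geom_sin. simpl. rewrite Rmult_0_l, cos_0, sin_0. split; ring.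
  - rewrite !tech5. destruct (Hrec (S N)) as [H1 H2]. rewrite H1, H2. split; nra.
Qed.

Lemma is_lim_seq_geom_cos : is_lim_seq (fun N => geom_cos (S N)) 0.
Proof.
  apply is_lim_seq_incr_1 with (u := geom_cos).
  apply is_lim_seq_pow_mul_bounded; [exact Hx|]. intros m. apply Rabs_le, COS_bound.
Qed.

Lemma is_lim_seq_geom_sin : is_lim_seq (fun N => geom_sin (S N)) 0.
Proof.
  apply is_lim_seq_incr_1 with (u := geom_sin).
  apply is_lim_seq_pow_mul_bounded; [exact Hx|]. intros m. apply Rabs_le, SIN_bound.
Qed.

Let dist2_eq : (1 - x * c) * (1 - x * c) + (x * s) * (x * s) = dist2 x th.
Proof. unfold dist2, c, s. pose proof (cos2_sin2 th). nra. Qed.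

Lemma is_series_geom_cos :
  is_series (fun m => x ^ m * cos (INR m * th)) ((1 - x * cos th) / dist2 x th).
Proof.
  pose proof (dist2_pos x th Hx).
  apply is_series_of_lim_sum, (is_lim_seq_ext (fun N =>
    ((1 - x * c) * (1 - geom_cos (S N)) + (x * s) * geom_sin (S N)) / dist2 x th)).
  - intros N. destruct (geom_trig_partial_sums N) as [E1 E2].
    change (sum_f_R0 _ N) with (sum_f_R0 geom_cos N).
    replace (geom_sin (S N)) with (- (- geom_sin (S N))) by ring.
    rewrite <- E1, <- E2, <- dist2_eq. rewrite <- dist2_eq in H. field. lra.
  - replace ((1 - x * cos th) / dist2 x th)
      with (((1 - x * c) * (1 - 0) + x * s * 0) * / dist2 x th) by (unfold c; field; lra).
    apply is_lim_seq_mult'; [|apply is_lim_seq_const].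
    apply is_lim_seq_plus'; apply is_lim_seq_mult'; try apply is_lim_seq_const.
    + apply is_lim_seq_minus'; [apply is_lim_seq_const | apply is_lim_seq_geom_cos].
    + apply is_lim_seq_geom_sin.
Qed.

Lemma is_series_geom_sin :
  is_series (fun m => x ^ m * sin (INR m * th)) (x * sin th / dist2 x th).
Proof.
  pose proof (dist2_pos x th Hx).
  apply is_series_of_lim_sum, (is_lim_seq_ext (fun N =>
    (x * s * (1 - geom_cos (S N)) - (1 - x * c) * geom_sin (S N)) / dist2 x th)).
  - intros N. destruct (geom_trig_partial_sums N) as [E1 E2].
    change (sum_f_R0 _ N) with (sum_f_R0 geom_sin N).
    replace (geom_sin (S N)) with (- (- geom_sin (S N))) by ring.
    rewrite <- E1, <- E2, <- dist2_eq. rewrite <- dist2_eq in H. field. lra.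
  - replace (x * sin th / dist2 x th)
      with ((x * s * (1 - 0) - (1 - x * c) * 0) * / dist2 x th) by (unfold s; field; lra).
    apply is_lim_seq_mult'; [|apply is_lim_seq_const].
    apply is_lim_seq_minus'; apply is_lim_seq_mult'; try apply is_lim_seq_const.
    + apply is_lim_seq_minus'; [apply is_lim_seq_const | apply is_lim_seq_geom_cos].
    + apply is_lim_seq_geom_sin.
Qed.

End GeometricTrig.

(* Laplace's formula: [legendre_cos m th] is the Legendre polynomial P_m(cos th). *)
Definition legendre_cos (m : nat) (th : R) : R :=
  sum_f_R0 (fun k => invsqrt_coef k * invsqrt_coef (m - k)
                     * cos ((INR k - INR (m - k)) * th)) m.

Lemma sum_invsqrt_conv_scal (g : nat -> nat -> R) (h : R) m :
  (forall k, (k <= m)%nat -> g k (m - k)%nat = invsqrt_coef k * invsqrt_coef (m - k) * h) ->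
  sum_f_R0 (fun k => g k (m - k)%nat) m = h.
Proof.
  intros Hg. rewrite (sum_eq _ (fun k => invsqrt_coef k * invsqrt_coef (m - k) * h)).
  - rewrite <- scal_sum. fold (invsqrt_conv m). rewrite invsqrt_conv_1. ring.
  - intros k Hk. now rewrite Hg.
Qed.

Section LegendreSeries.

Variables x th : R.
Hypothesis Hx : 0 <= x < 1.

Lemma ex_series_abs_invsqrt_coef (f : nat -> R) : (forall k, Rabs (f k) <= 1) ->
  ex_series (fun k => Rabs (invsqrt_coef k * x ^ k * f k)).
Proof.
  intros Hf. apply (@ex_series_le R_AbsRing R_CompleteNormedModule _ (fun k => x ^ k)).
  - intros k. change (norm (Rabs ?y)) with (Rabs (Rabs y)).
    rewrite Rabs_Rabsolu, !Rabs_mult, Rabs_pos_eq by (left; apply invsqrt_coef_pos).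
    rewrite (Rabs_pos_eq (x ^ k)) by (apply pow_le; lra).
    pose proof (invsqrt_coef_pos k). pose proof (invsqrt_coef_le_1 k).
    pose proof (pow_le x k ltac:(lra)). pose proof (Rabs_pos (f k)). specialize (Hf k).
    assert (invsqrt_coef k * x ^ k <= x ^ k) by nra. nra.
  - apply ex_series_geom. rewrite Rabs_pos_eq; lra.
Qed.

(* [re + i im] = (1 - x e^(i th))^(-1/2). *)
Let re_term (k : nat) := invsqrt_coef k * x ^ k * cos (INR k * th).
Let im_term (k : nat) := invsqrt_coef k * x ^ k * sin (INR k * th).
Let re := Series re_term.
Let im := Series im_term.

Let re_abs : ex_series (fun k => Rabs (re_term k)).
Proof. apply ex_series_abs_invsqrt_coef. intros k; apply Rabs_le, COS_bound. Qed.

Let im_abs : ex_series (fun k => Rabs (im_term k)).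
Proof. apply ex_series_abs_invsqrt_coef. intros k; apply Rabs_le, SIN_bound. Qed.

Let re_series : is_series re_term re.
Proof. apply Series_correct, ex_series_Rabs, re_abs. Qed.

Let im_series : is_series im_term im.
Proof. apply Series_correct, ex_series_Rabs, im_abs. Qed.

Let angle_split k m : (k <= m)%nat -> INR m * th = INR k * th + INR (m - k) * th.
Proof. intros. rewrite minus_INR by lia. ring. Qed.

Let pow_split k m : (k <= m)%nat -> x ^ m = x ^ k * x ^ (m - k).
Proof. intros. rewrite <- pow_add. f_equal. lia. Qed.

Lemma re_sq_sub_im_sq : re * re - im * im = (1 - x * cos th) / dist2 x th.
Proof.
  pose proof (is_series_mult _ _ _ _ re_series re_series re_abs re_abs) as Hre.
  pose proof (is_series_mult _ _ _ _ im_series im_series im_abs im_abs) as Him.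
  pose proof (is_series_minus _ _ _ _ Hre Him) as Hdiff.
  rewrite <- (is_series_unique _ _ (is_series_geom_cos x th Hx)).
  symmetry. apply is_series_unique.
  eapply is_series_ext; [|exact Hdiff].
  intros m. change (plus ?a (opp ?b)) with (a - b). cbv beta. rewrite <- minus_sum.
  apply (sum_invsqrt_conv_scal (fun k j => re_term k * re_term j - im_term k * im_term j)).
  intros k Hk. unfold re_term, im_term.
  rewrite (angle_split k m Hk), cos_plus, (pow_split k m Hk). ring.
Qed.

Lemma re_mul_im_add : re * im + im * re = x * sin th / dist2 x th.
Proof.
  pose proof (is_series_mult _ _ _ _ re_series im_series re_abs im_abs) as Hri.
  pose proof (is_series_mult _ _ _ _ im_series re_series im_abs re_abs) as Hir.
  pose proof (is_series_plus _ _ _ _ Hri Hir) as Hsum.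
  rewrite <- (is_series_unique _ _ (is_series_geom_sin x th Hx)).
  symmetry. apply is_series_unique.
  eapply is_series_ext; [|exact Hsum].
  intros m. change (plus ?a ?b) with (a + b). cbv beta. rewrite <- plus_sum.
  apply (sum_invsqrt_conv_scal (fun k j => re_term k * im_term j + im_term k * re_term j)).
  intros k Hk. unfold re_term, im_term.
  rewrite (angle_split k m Hk), sin_plus, (pow_split k m Hk). ring.
Qed.

Lemma is_series_legendre_norm :
  is_series (fun m => x ^ m * legendre_cos m th) (re * re + im * im).
Proof.
  pose proof (is_series_mult _ _ _ _ re_series re_series re_abs re_abs) as Hre.
  pose proof (is_series_mult _ _ _ _ im_series im_series im_abs im_abs) as Him.
  eapply is_series_ext; [|exact (is_series_plus _ _ _ _ Hre Him)].
  intros m. change (plus ?a ?b) with (a + b). cbv beta. rewrite <- plus_sum.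
  unfold legendre_cos. rewrite scal_sum. apply sum_eq. intros k Hk.
  unfold re_term, im_term.
  replace ((INR k - INR (m - k)) * th) with (INR k * th - INR (m - k) * th) by ring.
  rewrite cos_minus, (pow_split k m Hk). ring.
Qed.

(* |(1 - x e^(i th))^(-1/2)|^2 = |1 - x e^(i th)|^(-1). *)
Lemma is_series_legendre :
  is_series (fun m => x ^ m * legendre_cos m th) (/ sqrt (dist2 x th)).
Proof.
  pose proof (dist2_pos x th Hx) as Hd.
  assert (Hsq : (re * re + im * im) ^ 2 = / dist2 x th).
  { replace ((re * re + im * im) ^ 2)
      with ((re * re - im * im) ^ 2 + (re * im + im * re) ^ 2) by ring.
    rewrite re_sq_sub_im_sq, re_mul_im_add.
    pose proof (cos2_sin2 th). unfold dist2 in *. field_simplify_eq; [nra | lra]. }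
  replace (/ sqrt (dist2 x th)) with (re * re + im * im).
  - apply is_series_legendre_norm.
  - rewrite <- sqrt_inv, <- Hsq, sqrt_pow2; nra.
Qed.

End LegendreSeries.

(** * The potential of a regular polygon *)

Definition polygon_angle (n l : nat) : R := 2 * PI * INR l / INR n.

Lemma sum_cos_telescope (al : R) N :
  2 * sin (al / 2) * sum_f_R0 (fun l => cos (INR l * al)) N =
  sin ((INR N + / 2) * al) + sin (al / 2).
Proof.
  induction N as [|N IHN].
  - simpl. rewrite Rmult_0_l, cos_0.
    replace ((0 + / 2) * al) with (al / 2) by field. ring.
  - rewrite tech5, Rmult_plus_distr_l, IHN, S_INR.
    replace ((INR N + / 2) * al) with ((INR N + 1) * al - al / 2) by field.
    replace ((INR N + 1 + / 2) * al) with ((INR N + 1) * al + al / 2) by field.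
    rewrite sin_minus, sin_plus. ring.
Qed.

(* The sum is n when n divides z and 0 otherwise. *)
Lemma sum_cos_polygon_nonneg (n : nat) (z : Z) : (1 <= n)%nat ->
  0 <= sum_f_R0 (fun l => cos (IZR z * polygon_angle n l)) (pred n).
Proof.
  intros Hn. assert (HnR : 0 < INR n) by (apply lt_0_INR; lia).
  set (al := 2 * PI * IZR z / INR n).
  rewrite (sum_eq _ (fun l => cos (INR l * al)))
    by (intros i _; unfold al, polygon_angle; f_equal; field; lra).
  destruct (Req_dec (sin (al / 2)) 0) as [H0 | H0].
  - destruct (sin_eq_0_0 _ H0) as [k Hk].
    rewrite (sum_eq _ (fun _ => 1)).
    + rewrite sum_cte. pose proof (pos_INR (S (pred n))). nra.
    + intros i _. replace (INR i * al) with (2 * (IZR (Z.of_nat i * k) * PI)).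
      * apply cos_double_of_sin_0, sin_eq_0_1. eauto.
      * rewrite mult_IZR, <- INR_IZR_INZ.
        replace al with (2 * (al / 2)) by field. rewrite Hk. ring.
  - pose proof (sum_cos_telescope al (pred n)) as T.
    replace (INR (pred n)) with (INR n - 1) in T
      by (rewrite <- (Nat.succ_pred_pos n) at 1 by lia; rewrite S_INR; ring).
    replace ((INR n - 1 + / 2) * al) with (2 * (IZR z * PI) - al / 2) in T
      by (unfold al; field; lra).
    rewrite sin_minus, (sin_eq_0_1 (2 * (IZR z * PI))) in T
      by (exists (2 * z)%Z; rewrite mult_IZR; simpl; ring).
    rewrite (cos_double_of_sin_0 _ (sin_eq_0_1 _ (ex_intro _ z eq_refl))) in T.
    assert (sum_f_R0 (fun l => cos (INR l * al)) (pred n) = 0)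
      by (apply (Rmult_eq_reg_l (2 * sin (al / 2))); lra).
    lra.
Qed.

Lemma is_derive_inv_sqrt_dist2 x th : 0 <= x < 1 ->
  is_derive (fun y => / sqrt (dist2 y th)) x
            ((cos th - x) / (dist2 x th * sqrt (dist2 x th))).
Proof.
  intros Hx. pose proof (dist2_pos x th Hx) as Hd.
  pose proof (sqrt_lt_R0 _ Hd). pose proof (sqrt_sqrt _ (Rlt_le _ _ Hd)).
  unfold dist2 at 1. auto_derive;
    replace (1 + - (2 * x * cos th) + x * (x * 1)) with (dist2 x th) by (unfold dist2; ring).
  - repeat split; lra.
  - rewrite H0. field_simplify_eq; [|lra]. unfold dist2. ring.
Qed.

Section Polygon.

Variable n : nat.
Hypothesis Hn : (1 <= n)%nat.

Let th (l : nat) := polygon_angle n l.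

Definition polygon_potential (x : R) : R :=
  sum_f_R0 (fun l => / sqrt (dist2 x (th l))) (pred n).

(* x-component of the attraction of unit masses at the vertices of the unit n-gon on
   the point x (for 0 <= x < 1). *)
Definition polygon_pull_inside (x : R) : R :=
  sum_f_R0 (fun l => (cos (th l) - x) / (dist2 x (th l) * sqrt (dist2 x (th l)))) (pred n).

(* Minus the x-component of the attraction of the n-gon of radius x on the point 1. *)
Definition polygon_pull_outside (x : R) : R :=
  sum_f_R0 (fun l => (1 - x * cos (th l)) / (dist2 x (th l) * sqrt (dist2 x (th l)))) (pred n).

Definition polygon_coef (m : nat) : R :=
  sum_f_R0 (fun l => legendre_cos m (th l)) (pred n).

Lemma is_series_polygon_potential x : 0 <= x < 1 ->
  is_series (fun m => x ^ m * polygon_coef m) (polygon_potential x).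
Proof.
  intros Hx. unfold polygon_potential.
  eapply is_series_ext;
    [|apply (is_series_sum_f_R0 (fun l m => x ^ m * legendre_cos m (th l)))].
  - intros m. unfold polygon_coef. apply sum_f_R0_mul_l.
  - intros l _. apply is_series_legendre, Hx.
Qed.

Let polygon_cos_sum (z : Z) := sum_f_R0 (fun l => cos (IZR z * th l)) (pred n).

Lemma polygon_coef_eq m : polygon_coef m =
  sum_f_R0 (fun k => invsqrt_coef k * invsqrt_coef (m - k)
                     * polygon_cos_sum (Z.of_nat k - Z.of_nat (m - k))) m.
Proof.
  unfold polygon_coef, legendre_cos. rewrite sum_f_R0_swap.
  apply sum_eq. intros k _. unfold polygon_cos_sum. rewrite <- sum_f_R0_mul_l.
  apply sum_eq. intros l _. now rewrite minus_IZR, <- !INR_IZR_INZ.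
Qed.

Let polygon_coef_term_nonneg m k :
  0 <= invsqrt_coef k * invsqrt_coef (m - k)
       * polygon_cos_sum (Z.of_nat k - Z.of_nat (m - k)).
Proof.
  apply Rmult_le_pos; [|apply sum_cos_polygon_nonneg, Hn].
  pose proof (invsqrt_coef_pos k). pose proof (invsqrt_coef_pos (m - k)). nra.
Qed.

Lemma polygon_coef_nonneg m : 0 <= polygon_coef m.
Proof. rewrite polygon_coef_eq. apply cond_pos_sum, polygon_coef_term_nonneg. Qed.

Let INR_S_pred : INR (S (pred n)) = INR n.
Proof. f_equal. lia. Qed.

Let polygon_cos_sum_0 : polygon_cos_sum 0 = INR n.
Proof.
  unfold polygon_cos_sum. rewrite (sum_eq _ (fun _ => 1)), sum_cte, INR_S_pred; [ring|].
  intros l _. rewrite Rmult_0_l. apply cos_0.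
Qed.

Lemma polygon_coef_0 : polygon_coef 0 = INR n.
Proof. rewrite polygon_coef_eq. simpl. rewrite polygon_cos_sum_0. ring. Qed.

Lemma polygon_coef_2_ge : INR n / 4 <= polygon_coef 2.
Proof.
  rewrite polygon_coef_eq. simpl sum_f_R0.
  pose proof (polygon_coef_term_nonneg 2 0). pose proof (polygon_coef_term_nonneg 2 2).
  simpl in *. rewrite polygon_cos_sum_0. lra.
Qed.

Lemma polygon_potential_ge x : 0 <= x < 1 -> INR n + INR n / 4 * x ^ 2 <= polygon_potential x.
Proof.
  intros Hx.
  assert (Hterm : forall m, 0 <= x ^ m * polygon_coef m)
    by (intros m; apply Rmult_le_pos; [apply pow_le; lra | apply polygon_coef_nonneg]).
  pose proof (sum_incr _ 2 _ (proj1 (is_series_Reals _ _) (is_series_polygon_potential x Hx))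
                Hterm) as H2.
  simpl in H2. rewrite polygon_coef_0 in H2.
  pose proof polygon_coef_2_ge. pose proof (Hterm 1%nat). simpl in *. nra.
Qed.

Lemma polygon_potential_le x y : 0 <= x -> x <= y -> y < 1 ->
  polygon_potential x <= polygon_potential y.
Proof.
  intros. rewrite <- (is_series_unique _ _ (is_series_polygon_potential x ltac:(lra))).
  rewrite <- (is_series_unique _ _ (is_series_polygon_potential y ltac:(lra))).
  apply Series_le; [|eexists; apply is_series_polygon_potential; lra].
  intros m. pose proof (polygon_coef_nonneg m). split.
  - apply Rmult_le_pos; [apply pow_le|]; lra.
  - apply Rmult_le_compat_r; [|apply pow_incr]; lra.
Qed.

Lemma is_derive_polygon_potential x : 0 <= x < 1 ->
  is_derive polygon_potential x (polygon_pull_inside x).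
Proof.
  intros Hx. apply is_derive_sum_f_R0. intros l. apply is_derive_inv_sqrt_dist2, Hx.
Qed.

(* The pull is the derivative of the potential, which increases because its Taylor
   coefficients are nonnegative. *)
Lemma polygon_pull_inside_nonneg x : 0 <= x < 1 -> 0 <= polygon_pull_inside x.
Proof.
  intros Hx. apply (is_derive_ge0_of_right_monotone polygon_potential x _ (1 - x));
    [lra | apply is_derive_polygon_potential, Hx |].
  intros y Hy. apply polygon_potential_le; lra.
Qed.

Lemma polygon_pull_outside_eq x : 0 <= x < 1 ->
  polygon_pull_outside x = polygon_potential x + x * polygon_pull_inside x.
Proof.
  intros Hx. unfold polygon_pull_outside, polygon_potential, polygon_pull_inside.
  rewrite <- sum_f_R0_mul_l, <- plus_sum. apply sum_eq. intros l _.
  pose proof (dist2_pos x (th l) Hx) as Hd. pose proof (sqrt_lt_R0 _ Hd).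
  field_simplify_eq; [|lra]. unfold dist2. ring.
Qed.

Lemma polygon_pull_outside_gt x : 0 < x < 1 -> INR n < polygon_pull_outside x.
Proof.
  intros Hx. rewrite polygon_pull_outside_eq by lra.
  pose proof (polygon_pull_inside_nonneg x ltac:(lra)).
  pose proof (polygon_potential_ge x ltac:(lra)).
  assert (0 < INR n) by (apply lt_0_INR; lia).
  assert (0 < INR n / 4 * x ^ 2) by (apply Rmult_lt_0_compat; [lra | nra]).
  nra.
Qed.

End Polygon.

(** * The equations of motion on the real axis *)

Lemma Derive_n_rotation_0 (X Y : R) : Derive_n (fun t => X * cos t - Y * sin t) 2 0 = - X.
Proof.
  simpl. rewrite (Derive_ext _ (fun t => - X * sin t - Y * cos t)).
  - apply is_derive_unique. auto_derive; [exact I|]. rewrite sin_0, cos_0. ring.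
  - intros t. apply is_derive_unique. auto_derive; [exact I|]. ring.
Qed.

Lemma sum_f_R0_split_rings (f : nat -> R) n : (1 <= n)%nat ->
  sum_f_R0 f (2 * n) = f 0%nat + sum_f_R0 (fun i => f (S i)) (pred n)
                       + sum_f_R0 (fun i => f (S n + i)%nat) (pred n).
Proof.
  intros Hn. rewrite decomp_sum by lia.
  rewrite (tech2 (fun i => f (S i)) (pred n) (pred (2 * n))) by lia.
  replace (pred (2 * n) - S (pred n))%nat with (pred n) by lia.
  rewrite Rplus_assoc. do 2 f_equal. apply sum_eq. intros i _. f_equal. lia.
Qed.

Lemma pull_scale (r a b : R) : 0 < r ->
  (r * a) / sqrt ((r * a) ^ 2 + (r * b) ^ 2) ^ 3 = a / sqrt (a ^ 2 + b ^ 2) ^ 3 / r ^ 2.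
Proof.
  intros Hr.
  replace ((r * a) ^ 2 + (r * b) ^ 2) with (r ^ 2 * (a ^ 2 + b ^ 2)) by ring.
  rewrite sqrt_mult, sqrt_pow2 by (nra || lra).
  destruct (Req_dec (sqrt (a ^ 2 + b ^ 2)) 0) as [E|E].
  - rewrite E, Rmult_0_r, !pow_i, !Rdiv_0_r by lia. field. lra.
  - field. split; lra.
Qed.

(* x-component of the attraction of the other vertices of the unit n-gon on the
   vertex 1. *)
Definition polygon_self_pull (n : nat) : R :=
  sum_f_R0 (fun i => if Nat.eqb i 0 then 0 else
    (cos (polygon_angle n i) - 1)
    / sqrt ((cos (polygon_angle n i) - 1) ^ 2 + sin (polygon_angle n i) ^ 2) ^ 3) (pred n).

Section Configuration.

Variables (n : nat) (r1 r2 : R).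
Hypothesis Hn : (1 <= n)%nat.
Hypothesis Hr1 : 0 < r1.
Hypothesis Hr12 : r1 < r2.

Let X (j : nat) := fst (pos n r1 r2 j).
Let Y (j : nat) := snd (pos n r1 r2 j).
Let c (i : nat) := cos (polygon_angle n i).
Let s (i : nat) := sin (polygon_angle n i).

Definition pull_x (k j : nat) : R :=
  if Nat.eqb j k then 0
  else (X j - X k) / sqrt ((X j - X k) ^ 2 + (Y j - Y k) ^ 2) ^ 3.

Lemma pos_inner i : (i < n)%nat -> pos n r1 r2 (S i) = (r1 * c i, r1 * s i).
Proof.
  intros Hi. unfold pos. simpl Nat.eqb.
  replace (Nat.leb (S i) n) with true by (symmetry; apply Nat.leb_le; lia).
  now replace (S i - 1)%nat with i by lia.
Qed.

Lemma pos_outer i : pos n r1 r2 (S n + i) = (r2 * c i, r2 * s i).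
Proof.
  unfold pos. simpl Nat.eqb.
  replace (Nat.leb (S n + i) n) with false by (symmetry; apply Nat.leb_gt; lia).
  now replace (S n + i - n - 1)%nat with i by lia.
Qed.

Lemma mass_inner m0 m1 m2 i : (i < n)%nat -> mass n m0 m1 m2 (S i) = m1.
Proof.
  intros Hi. unfold mass. simpl Nat.eqb.
  now replace (Nat.leb (S i) n) with true by (symmetry; apply Nat.leb_le; lia).
Qed.

Lemma mass_outer m0 m1 m2 i : mass n m0 m1 m2 (S n + i) = m2.
Proof.
  unfold mass. simpl Nat.eqb.
  now replace (Nat.leb (S n + i) n) with false by (symmetry; apply Nat.leb_gt; lia).
Qed.

Lemma body_equation_at_0 m0 m1 m2 k : (k <= 2 * n)%nat -> 0 < mass n m0 m1 m2 k ->
  is_solution n r1 r2 m0 m1 m2 ->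
  - X k = sum_f_R0 (fun j => mass n m0 m1 m2 j * pull_x k j) (2 * n).
Proof.
  intros Hk Hm Hsol. destruct (Hsol k 0 Hk) as [Hx _].
  assert (Hat0 : forall i, motx n r1 r2 i 0 = X i /\ moty n r1 r2 i 0 = Y i)
    by (intros i; unfold motx, moty, X, Y; rewrite cos_0, sin_0; split; ring).
  unfold motx at 1 in Hx. rewrite Derive_n_rotation_0 in Hx.
  apply Rmult_eq_reg_l with (mass n m0 m1 m2 k); [|lra].
  unfold X at 1. rewrite Hx, <- sum_f_R0_mul_l. unfold force. apply sum_eq. intros j _.
  unfold pull_x, dist_at. destruct (Nat.eqb j k); [ring|].
  rewrite !(proj1 (Hat0 _)), !(proj2 (Hat0 _)). unfold Rdiv. ring.
Qed.

Lemma body_equation_rings m0 m1 m2 k : (k <= 2 * n)%nat -> 0 < mass n m0 m1 m2 k ->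
  is_solution n r1 r2 m0 m1 m2 ->
  - X k = m0 * pull_x k 0 + m1 * sum_f_R0 (fun i => pull_x k (S i)) (pred n)
          + m2 * sum_f_R0 (fun i => pull_x k (S n + i)) (pred n).
Proof.
  intros Hk Hm Hsol. rewrite (body_equation_at_0 m0 m1 m2 k Hk Hm Hsol).
  rewrite sum_f_R0_split_rings, <- !sum_f_R0_mul_l by exact Hn.
  f_equal; [f_equal|]; apply sum_eq; intros i Hi.
  - now rewrite mass_inner by lia.
  - now rewrite mass_outer.
Qed.

Let c_0 : c 0 = 1.
Proof. unfold c, polygon_angle. rewrite Rmult_0_r, Rdiv_0_l. apply cos_0. Qed.

Let s_0 : s 0 = 0.
Proof. unfold s, polygon_angle. rewrite Rmult_0_r, Rdiv_0_l. apply sin_0. Qed.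

Let X_inner i : (i < n)%nat -> X (S i) = r1 * c i.
Proof. intros Hi. unfold X. now rewrite pos_inner. Qed.

Let Y_inner i : (i < n)%nat -> Y (S i) = r1 * s i.
Proof. intros Hi. unfold Y. now rewrite pos_inner. Qed.

Let X_outer i : X (S n + i) = r2 * c i.
Proof. unfold X. now rewrite pos_outer. Qed.

Let Y_outer i : Y (S n + i) = r2 * s i.
Proof. unfold Y. now rewrite pos_outer. Qed.

Let X_1 : X 1 = r1.
Proof. rewrite X_inner, c_0 by lia. ring. Qed.

Let Y_1 : Y 1 = 0.
Proof. rewrite Y_inner, s_0 by lia. ring. Qed.

Let X_Sn : X (S n) = r2.
Proof. rewrite <- (Nat.add_0_r (S n)), X_outer, c_0. ring. Qed.

Let Y_Sn : Y (S n) = 0.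
Proof. rewrite <- (Nat.add_0_r (S n)), Y_outer, s_0. ring. Qed.

Let pull_center r : 0 < r -> (0 - r) / sqrt ((0 - r) ^ 2 + (0 - 0) ^ 2) ^ 3 = - / r ^ 2.
Proof.
  intros Hr. replace ((0 - r) ^ 2 + (0 - 0) ^ 2) with (r ^ 2) by ring.
  rewrite sqrt_pow2 by lra. field. lra.
Qed.

Lemma pull_x_inner_center : pull_x 1 0 = - / r1 ^ 2.
Proof. unfold pull_x. simpl Nat.eqb. rewrite X_1, Y_1. apply pull_center, Hr1. Qed.

Lemma pull_x_outer_center : pull_x (S n) 0 = - / r2 ^ 2.
Proof. unfold pull_x. simpl Nat.eqb. rewrite X_Sn, Y_Sn. apply pull_center. lra. Qed.

Let sqrt_pow3 D : 0 <= D -> sqrt D ^ 3 = D * sqrt D.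
Proof. intros HD. rewrite <- (sqrt_sqrt D HD) at 2. ring. Qed.

Let dist2_polar x i : (c i - x) ^ 2 + s i ^ 2 = dist2 x (polygon_angle n i).
Proof. unfold dist2, c, s. pose proof (cos2_sin2 (polygon_angle n i)). nra. Qed.

Let dist2_polar_scaled x i : (x * c i - 1) ^ 2 + (x * s i) ^ 2 = dist2 x (polygon_angle n i).
Proof. unfold dist2, c, s. pose proof (cos2_sin2 (polygon_angle n i)). nra. Qed.

Let pull_same_ring r i : 0 < r ->
  (r * c i - r) / sqrt ((r * c i - r) ^ 2 + (r * s i - 0) ^ 2) ^ 3
  = (c i - 1) / sqrt ((c i - 1) ^ 2 + s i ^ 2) ^ 3 / r ^ 2.
Proof.
  intros Hr.
  replace (r * c i - r) with (r * (c i - 1)) by ring.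
  replace (r * s i - 0) with (r * s i) by ring.
  apply pull_scale, Hr.
Qed.

Lemma sum_pull_x_inner_inner :
  sum_f_R0 (fun i => pull_x 1 (S i)) (pred n) = polygon_self_pull n / r1 ^ 2.
Proof.
  unfold polygon_self_pull. rewrite sum_f_R0_div_r.
  apply sum_eq. intros i Hi. unfold pull_x. simpl Nat.eqb.
  destruct (Nat.eqb i 0); [unfold Rdiv; ring|].
  rewrite X_1, Y_1, X_inner, Y_inner by lia.
  apply pull_same_ring, Hr1.
Qed.

Lemma sum_pull_x_outer_outer :
  sum_f_R0 (fun i => pull_x (S n) (S n + i)) (pred n) = polygon_self_pull n / r2 ^ 2.
Proof.
  unfold polygon_self_pull. rewrite sum_f_R0_div_r.
  apply sum_eq. intros i Hi. unfold pull_x.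
  replace (Nat.eqb (S n + i) (S n)) with (Nat.eqb i 0)
    by (apply Bool.eq_iff_eq_true; rewrite !Nat.eqb_eq; lia).
  destruct (Nat.eqb i 0); [unfold Rdiv; ring|].
  rewrite X_Sn, Y_Sn, X_outer, Y_outer.
  apply pull_same_ring. lra.
Qed.

Lemma sum_pull_x_outer_inner :
  sum_f_R0 (fun i => pull_x 1 (S n + i)) (pred n) = polygon_pull_inside n (r1 / r2) / r2 ^ 2.
Proof.
  unfold polygon_pull_inside. rewrite sum_f_R0_div_r.
  apply sum_eq. intros i Hi. unfold pull_x.
  replace (Nat.eqb (S n + i) 1) with false by (symmetry; apply Nat.eqb_neq; lia).
  rewrite X_outer, Y_outer, X_1, Y_1.
  replace (r2 * c i - r1) with (r2 * (c i - r1 / r2)) by (field; lra).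
  replace (r2 * s i - 0) with (r2 * s i) by ring.
  pose proof (Rdiv_in_01 r1 r2 Hr1 Hr12).
  rewrite pull_scale, dist2_polar, sqrt_pow3 by (lra || (left; apply dist2_pos; lra)).
  reflexivity.
Qed.

Lemma sum_pull_x_inner_outer :
  sum_f_R0 (fun i => pull_x (S n) (S i)) (pred n) = - (polygon_pull_outside n (r1 / r2) / r2 ^ 2).
Proof.
  rewrite <- (Rmult_1_l (_ / _)), Ropp_mult_distr_l. unfold polygon_pull_outside.
  rewrite sum_f_R0_div_r, <- sum_f_R0_mul_l.
  apply sum_eq. intros i Hi. unfold pull_x.
  replace (Nat.eqb (S i) (S n)) with false by (symmetry; apply Nat.eqb_neq; lia).
  rewrite X_inner, Y_inner, X_Sn, Y_Sn by lia.
  replace (r1 * c i - r2) with (r2 * (r1 / r2 * c i - 1)) by (field; lra).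
  replace (r1 * s i - 0) with (r2 * (r1 / r2 * s i)) by (field; lra).
  rewrite pull_scale, dist2_polar_scaled by lra.
  pose proof (Rdiv_in_01 r1 r2 Hr1 Hr12).
  pose proof (dist2_pos (r1 / r2) (polygon_angle n i) ltac:(lra)) as Hd.
  pose proof (sqrt_lt_R0 _ Hd).
  rewrite sqrt_pow3 by lra. unfold c. field. repeat split; lra.
Qed.

Lemma inner_vertex_equation m0 m1 m2 : 0 < m1 -> is_solution n r1 r2 m0 m1 m2 ->
  - r1 ^ 3 = - m0 + m1 * polygon_self_pull n
             + m2 * ((r1 / r2) ^ 2 * polygon_pull_inside n (r1 / r2)).
Proof.
  intros Hm1 Hsol.
  assert (Hm : 0 < mass n m0 m1 m2 1) by (rewrite mass_inner by lia; exact Hm1).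
  pose proof (body_equation_rings m0 m1 m2 1 ltac:(lia) Hm Hsol) as E.
  rewrite X_1, pull_x_inner_center, sum_pull_x_inner_inner, sum_pull_x_outer_inner in E.
  apply Rmult_eq_compat_l with (r := r1 ^ 2) in E.
  replace (r1 ^ 2 * - r1) with (- r1 ^ 3) in E by ring.
  rewrite E. field. lra.
Qed.

Lemma outer_vertex_equation m0 m1 m2 : 0 < m2 -> is_solution n r1 r2 m0 m1 m2 ->
  - r2 ^ 3 = - m0 - m1 * polygon_pull_outside n (r1 / r2) + m2 * polygon_self_pull n.
Proof.
  intros Hm2 Hsol.
  assert (Hm : 0 < mass n m0 m1 m2 (S n))
    by (rewrite <- (Nat.add_0_r (S n)), mass_outer; exact Hm2).
  pose proof (body_equation_rings m0 m1 m2 (S n) ltac:(lia) Hm Hsol) as E.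
  rewrite X_Sn, pull_x_outer_center, sum_pull_x_inner_outer, sum_pull_x_outer_outer in E.
  apply Rmult_eq_compat_l with (r := r2 ^ 2) in E.
  replace (r2 ^ 2 * - r2) with (- r2 ^ 3) in E by ring.
  rewrite E. field. lra.
Qed.

End Configuration.

(* The differences of two mass systems solve a homogeneous 2x2 system whose
   determinant (N + sg)^2 - (N + a) (N - b) is positive. *)
Lemma mass_differences_0 (N sg a b d0 d1 d2 : R) : 0 < N + a -> N - b < 0 ->
  d0 + N * (d1 + d2) = 0 ->
  - d0 + d1 * sg + d2 * a = 0 ->
  - d0 - d1 * b + d2 * sg = 0 ->
  d0 = 0 /\ d1 = 0 /\ d2 = 0.
Proof.
  intros Ha Hb Htot E1 E2.
  assert (A : (N + sg) * d1 + (N + a) * d2 = 0) by lra.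
  assert (B : (N - b) * d1 + (N + sg) * d2 = 0) by lra.
  set (det := (N + sg) * (N + sg) - (N + a) * (N - b)).
  assert (Hdet : 0 < det).
  { replace det with ((N + sg) * (N + sg) + (N + a) * (b - N)) by (unfold det; ring).
    apply Rplus_le_lt_0_compat; [apply Rle_0_sqr | apply Rmult_lt_0_compat; lra]. }
  assert (Hd1 : det * d1 = 0).
  { replace (det * d1) with ((N + sg) * ((N + sg) * d1 + (N + a) * d2)
                             - (N + a) * ((N - b) * d1 + (N + sg) * d2)) by (unfold det; ring).
    rewrite A, B. ring. }
  assert (Hd2 : det * d2 = 0).
  { replace (det * d2) with ((N + sg) * ((N - b) * d1 + (N + sg) * d2)
                             - (N - b) * ((N + sg) * d1 + (N + a) * d2)) by (unfold det; ring).
    rewrite A, B. ring. }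
  apply Rmult_integral in Hd1 as [|Hd1]; [lra|].
  apply Rmult_integral in Hd2 as [|Hd2]; [lra|].
  subst. lra.
Qed.

Theorem proposition4 (n : nat) (rho1 rho2 : R) :
  (2 <= n)%nat -> 0 < rho1 -> rho1 < rho2 -> ~ really_perverse n rho1 rho2.
Proof.
  intros Hn H1 H12
    (m0 & m1 & m2 & m0' & m1' & m2' & Hm & Hm' & Hne & Htot & _ & Hs & Hs').
  destruct Hm as (p0 & p1 & p2 & _). destruct Hm' as (p0' & p1' & p2' & _).
  assert (Hn1 : (1 <= n)%nat) by lia.
  pose proof (Rdiv_in_01 rho1 rho2 H1 H12) as Hx.
  pose proof (inner_vertex_equation n rho1 rho2 Hn1 H1 H12 m0 m1 m2 p1 Hs).
  pose proof (inner_vertex_equation n rho1 rho2 Hn1 H1 H12 m0' m1' m2' p1' Hs').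
  pose proof (outer_vertex_equation n rho1 rho2 Hn1 H1 H12 m0 m1 m2 p2 Hs).
  pose proof (outer_vertex_equation n rho1 rho2 Hn1 H1 H12 m0' m1' m2' p2' Hs').
  pose proof (polygon_pull_inside_nonneg n Hn1 (rho1 / rho2) ltac:(lra)).
  pose proof (polygon_pull_outside_gt n Hn1 (rho1 / rho2) Hx).
  assert (0 < INR n) by (apply lt_0_INR; lia).
  unfold total_mass in Htot. set (x := rho1 / rho2) in *.
  assert (Hdiff : m0 - m0' = 0 /\ m1 - m1' = 0 /\ m2 - m2' = 0)
    by (apply (mass_differences_0 (INR n) (polygon_self_pull n)
                 (x ^ 2 * polygon_pull_inside n x) (polygon_pull_outside n x)); nra).
  apply Hne. repeat f_equal; lra.
Qed.
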